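(* Let $\mathcal{C}$ be a clutter and let $f\neq 0$ be a homogeneous binomial in $I(X)$ of the form $f=t_i^b-t^c$ with $b\in\mathbb{N}$, $c\in\mathbb{N}^s$ and $i\notin\mathrm{supp}(c)$. Then (a) $\deg(f)\geq q-1$; and (b) if $\deg(f)=q-1$, then $f=t_i^{q-1}-t_j^{q-1}$ for some $j\neq i$.
   Context: Let $K=\mathbb{F}_q$ be a finite field with $q\neq 2$ elements. A clutter $\mathcal{C}$ with vertex set $\{y_1,\ldots,y_n\}$ is a family of subsets (edges) of this set such that no edge is contained in another; let its edges be $f_1,\ldots,f_s$ ($s\geq 2$) with characteristic vectors $v_i=\sum_{y_j\in f_i}e_j\in\{0,1\}^n$ (these are pairwise distinct). For $x\in K^n$ write $x^{v_i}=\prod_j x_j^{v_{ij}}$. Let $X=\{[(x^{v_1},\ldots,x^{v_s})]\in\mathbb{P}^{s-1}: x\in (K^* )^n\}$, let $S=K[t_1,\ldots,t_s]$ with the standard grading, and let $I(X)$ be the ideal of $S$ generated by the homogeneous polynomials vanishing on $X$. For $c\in\mathbb{N}^s$, $t^c=t_1^{c_1}\cdots t_s^{c_s}$ and $\mathrm{supp}(c)=\{k: c_k\neq 0\}$. *)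

From HB Require Import structures.
From mathcomp Require Import all_boot all_order all_algebra all_field.
Set Implicit Arguments. Unset Strict Implicit. Unset Printing Implicit Defensive.
Import GRing.Theory.
Local Open Scope ring_scope.

(* A clutter on vertex set {y_0,...,y_(n-1)} with edges E 0, ..., E (s-1):
   no edge is contained in a different one (this forces distinct edges). *)
Definition is_clutter (n s : nat) (E : 'I_s -> {set 'I_n}) : Prop :=
  forall k l : 'I_s, k != l -> ~~ (E k \subset E l).

(* x^{v_k} = prod_{y_j in f_k} x_j, v_k the characteristic vector of edge E k *)
Definition edge_mon (K : fieldType) (n s : nat) (E : 'I_s -> {set 'I_n})
  (x : 'I_n -> K) (k : 'I_s) : K := \prod_(j in E k) x j.

Definition eval_mon (K : fieldType) (s : nat) (c : {ffun 'I_s -> nat})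
  (P : 'I_s -> K) : K := \prod_(k < s) P k ^+ c k.

Definition pure_exp (s : nat) (i : 'I_s) (b : nat) : {ffun 'I_s -> nat} :=
  [ffun k => if k == i then b else 0%N].

(* the binomial t^a - t^c vanishes at every point of X, i.e. at all
   (x^{v_1},...,x^{v_s}) with x in (K^x)^n (nonzero entries) (for homogeneous binomials this is
   membership in I(X)) *)
Definition binom_vanishes_on_X (K : fieldType) (n s : nat)
  (E : 'I_s -> {set 'I_n}) (a c : {ffun 'I_s -> nat}) : Prop :=
  forall x : 'I_n -> K, (forall j, x j != 0) ->
    eval_mon a (edge_mon E x) = eval_mon c (edge_mon E x).

Definition mdeg (s : nat) (c : {ffun 'I_s -> nat}) : nat := (\sum_(k < s) c k)%N.

From HB Require Import structures.
From mathcomp Require Import all_boot all_order all_algebra all_field.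
Import GRing.Theory.
Local Open Scope ring_scope.
Set Implicit Arguments.
Unset Strict Implicit.

(* Evaluate f = t_i^b - t^c at the image of the point x with x_m = a and all
   other coordinates 1.  The monomial x^{v_k} is a or 1 according to whether
   m lies in the k-th edge, so t^c becomes a^(w m), where w m is the total
   c-weight of the edges through m.  Since c is nonzero and i is not in its
   support, the clutter property gives j in supp c and a vertex m in E j but
   not in E i; then a^(w m) = 1 for every nonzero a, so q - 1 <= w m <= deg f.
   When deg f = q - 1, every vertex weight is 0 or q - 1 = deg c, and a second
   edge l in supp c would produce a vertex in E j \ E l whose weight misses c l,
   a contradiction. *)

Lemma cardm1_le_exponent (K : finFieldType) (d : nat) :
  (0 < d)%N -> (forall x : K, x != 0 -> x ^+ d = 1) -> (#|K|.-1 <= d)%N.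
Proof.
move=> d_gt0 xd1.
have nz_p : ('X^d - (1 : K)%:P) != 0 by rewrite -size_poly_eq0 size_XnsubC.
have := max_poly_roots nz_p (rs := enum (predC1 (0 : K))).
rewrite size_XnsubC // -cardE cardC1 ltnS; apply; last exact: enum_uniq.
apply/allP => x; rewrite mem_enum /= => x_nz.
by rewrite /root !hornerE xd1 // subrr.
Qed.

Lemma expf_cardm1 (K : finFieldType) (x : K) : x != 0 -> x ^+ #|K|.-1 = 1.
Proof.
move=> x_nz; apply: (mulfI x_nz); rewrite mulr1 -exprS prednK ?expf_card //.
by apply/card_gt0P; exists 0.
Qed.

Lemma eval_mon_pure (K : fieldType) (s : nat) (i : 'I_s) (b : nat) (P : 'I_s -> K) :
  eval_mon (pure_exp i b) P = P i ^+ b.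
Proof.
rewrite /eval_mon (bigD1 i) //= ffunE eqxx big1 ?mulr1 // => k /negPf ki.
by rewrite ffunE ki expr0.
Qed.

Lemma mdeg_pure (s : nat) (i : 'I_s) (b : nat) : mdeg (pure_exp i b) = b.
Proof.
rewrite /mdeg (bigD1 i) //= ffunE eqxx big1 ?addn0 // => k /negPf ki.
by rewrite ffunE ki.
Qed.

Lemma exists_exp_gt0 (s : nat) (i : 'I_s) (c : {ffun 'I_s -> nat}) :
  pure_exp i (mdeg c) != c -> exists j, (0 < c j)%N.
Proof.
move=> c_nz; apply/existsP; apply: contraR c_nz => /existsPn c_le0.
have c0 k : c k = 0%N by apply/eqP; rewrite -leqn0 leqNgt c_le0.
by apply/eqP/ffunP => k; rewrite /mdeg big1 // !ffunE c0; case: ifP.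
Qed.

Lemma pure_exp_single (s : nat) (j : 'I_s) (c : {ffun 'I_s -> nat}) :
  (forall l, l != j -> c l = 0%N) -> c = pure_exp j (mdeg c).
Proof.
move=> c0; apply/ffunP => k; rewrite ffunE.
case: eqP => [->|/eqP kj]; last exact: c0.
by rewrite /mdeg (bigD1 j) //= big1 ?addn0.
Qed.

Section VertexWeight.

Variables (n s : nat) (E : 'I_s -> {set 'I_n}) (c : {ffun 'I_s -> nat}).

Definition vertex_weight (m : 'I_n) : nat :=
  (\sum_(k < s) (if m \in E k then c k else 0))%N.

Lemma vertex_weight_le_mdeg m : (vertex_weight m <= mdeg c)%N.
Proof. by apply: leq_sum => k _; case: ifP. Qed.

Lemma exp_le_vertex_weight m k : m \in E k -> (c k <= vertex_weight m)%N.
Proof. by move=> mk; rewrite /vertex_weight (bigD1 k) //= mk leq_addr. Qed.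

Lemma vertex_weight_addn_le_mdeg m l :
  m \notin E l -> (vertex_weight m + c l <= mdeg c)%N.
Proof.
move=> ml.
have -> : mdeg c = (vertex_weight m + \sum_(k < s) (if m \in E k then 0 else c k))%N.
  by rewrite -big_split; apply: eq_bigr => k _ /=; case: ifP; rewrite ?addn0.
by rewrite leq_add2l (bigD1 l) //= (negPf ml) leq_addr.
Qed.

Definition spike (K : fieldType) (m : 'I_n) (a : K) (j : 'I_n) : K :=
  if j == m then a else 1.

Lemma edge_mon_spike (K : fieldType) m (a : K) k :
  edge_mon E (spike m a) k = if m \in E k then a else 1.
Proof.
rewrite /edge_mon /spike -big_mkcondr /=.
case: ifP => mk.
  rewrite (eq_bigl (pred1 m)) ?big_pred1_eq // => j /=.
  by case: eqP => [->|]; rewrite ?mk ?andbF ?andbT.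
by rewrite big_pred0 // => j /=; case: eqP => [->|]; rewrite ?mk ?andbF.
Qed.

Lemma eval_mon_spike (K : fieldType) m (a : K) :
  eval_mon c (edge_mon E (spike m a)) = a ^+ vertex_weight m.
Proof.
rewrite /eval_mon /vertex_weight -prodrXr; apply: eq_bigr => k _.
by rewrite edge_mon_spike; case: ifP; rewrite ?expr1n ?expr0.
Qed.

Lemma vanishes_spike (K : fieldType) i b m (a : K) :
  binom_vanishes_on_X K E (pure_exp i b) c -> a != 0 ->
  (if m \in E i then a else 1) ^+ b = a ^+ vertex_weight m.
Proof.
move=> vanish a_nz; have := vanish (spike m a).
rewrite eval_mon_pure eval_mon_spike edge_mon_spike; apply=> j.
by rewrite /spike; case: ifP; rewrite ?oner_eq0.
Qed.

(* In both cases x_m = a contributes 1 to t_i^b, for every nonzero a. *)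
Lemma cardm1_le_vertex_weight (K : finFieldType) i b m :
  binom_vanishes_on_X K E (pure_exp i b) c ->
  m \notin E i \/ b = #|K|.-1 -> (0 < vertex_weight m)%N ->
  (#|K|.-1 <= vertex_weight m)%N.
Proof.
move=> vanish mi_or_b w_gt0; apply: cardm1_le_exponent => // a a_nz.
rewrite -(vanishes_spike m vanish a_nz).
case: mi_or_b => [/negPf -> | ->]; first exact: expr1n.
by case: ifP; rewrite ?expr1n ?(expf_cardm1 a_nz).
Qed.

End VertexWeight.

Theorem lemma3p4 (K : finFieldType) (n s : nat) (E : 'I_s -> {set 'I_n})
  (hq : #|K| != 2%N) (hs : (2 <= s)%N) (hC : is_clutter E)
  (i : 'I_s) (b : nat) (c : {ffun 'I_s -> nat})
  (hsupp : c i = 0%N)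
  (hhom : mdeg (pure_exp i b) = mdeg c)
  (hnz : pure_exp i b != c)
  (hI : binom_vanishes_on_X K E (pure_exp i b) c) :
  (#|K|.-1 <= mdeg (pure_exp i b))%N /\
  (mdeg (pure_exp i b) = #|K|.-1 ->
     b = #|K|.-1 /\ exists j : 'I_s, j != i /\ c = pure_exp j #|K|.-1).
Proof.
rewrite mdeg_pure in hhom *; rewrite hhom in hnz.
have [j cj_gt0] := exists_exp_gt0 hnz.
have ji : j != i by apply: contraTneq cj_gt0 => ->; rewrite hsupp.
have weight_gt0 m : m \in E j -> (0 < vertex_weight E c m)%N.
  by move=> mj; apply: leq_trans cj_gt0 (exp_le_vertex_weight c mj).
have /subsetPn [m mj mi] := hC j i ji.
split.
  apply: leq_trans (cardm1_le_vertex_weight hI (or_introl mi) (weight_gt0 m mj)) _.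
  by rewrite hhom vertex_weight_le_mdeg.
move=> b_q; split=> //; exists j; split=> //.
have c_out l : l != j -> c l = 0%N.
  move=> lj; have jl : j != l by rewrite eq_sym.
  have /subsetPn [m' m'j m'l] := hC j l jl.
  apply/eqP; rewrite -leqn0 -(leq_add2l #|K|.-1) addn0.
  have := vertex_weight_addn_le_mdeg c m'l; rewrite -hhom b_q.
  apply: leq_trans; rewrite leq_add2r.
  exact: cardm1_le_vertex_weight hI (or_intror b_q) (weight_gt0 m' m'j).
by rewrite {1}(pure_exp_single c_out) -hhom b_q.
Qed.
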